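(* A finitely generated group with the Powers property is not presentable by a product.
   Context: (de la Harpe) A group $\Gamma\neq\{1\}$ is a Powers group (has the Powers property) if for every finite subset $F\subset\Gamma\setminus\{1\}$ and every integer $N\ge 1$ there exist a partition $\Gamma=D\sqcup E$ and elements $\gamma_1,\dots,\gamma_N\in\Gamma$ such that $fD\cap D=\emptyset$ for all $f\in F$ and $\gamma_jE\cap\gamma_kE=\emptyset$ for all $j\neq k$. An infinite group $\Gamma$ is not presentable by a product if for every homomorphism $\varphi\colon \Gamma_1\times\Gamma_2\to\Gamma$ whose image has finite index in $\Gamma$, at least one of $\varphi(\Gamma_1)$, $\varphi(\Gamma_2)$ is finite. *)

From Stdlib Require Import List.
Import ListNotations.

Record group : Type := Group {
  carrier :> Type;
  gmul : carrier -> carrier -> carrier;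
  gone : carrier;
  ginv : carrier -> carrier;
  gmulA : forall x y z, gmul x (gmul y z) = gmul (gmul x y) z;
  gmul1 : forall x, gmul gone x = x;
  gmulg1 : forall x, gmul x gone = x;
  gmulV : forall x, gmul (ginv x) x = gone;
  gmulgV : forall x, gmul x (ginv x) = gone
}.

Arguments gmul {g}.
Arguments gone {g}.
Arguments ginv {g}.

Definition finite_set {T : Type} (S : T -> Prop) : Prop :=
  exists l : list T, forall x, S x -> In x l.

Definition infinite_group (G : group) : Prop :=
  ~ finite_set (fun _ : G => True).

Inductive generated {G : group} (S : G -> Prop) : G -> Prop :=
| gen_one : generated S gone
| gen_in : forall x, S x -> generated S x
| gen_mul : forall x y, generated S x -> generated S y -> generated S (gmul x y)
| gen_inv : forall x, generated S x -> generated S (ginv x).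

Definition finitely_generated (G : group) : Prop :=
  exists l : list G, forall g : G, generated (fun x => In x l) g.

Definition finite_index {G : group} (H : G -> Prop) : Prop :=
  exists l : list G, forall g : G,
    exists c h, In c l /\ H h /\ g = gmul c h.

(** A homomorphism from the direct product G1 x G2 to G, written as a
    two-argument map phi (a, b) = phi a b. *)
Definition prod_hom {G1 G2 G : group} (phi : G1 -> G2 -> G) : Prop :=
  forall a a' b b', phi (gmul a a') (gmul b b') = gmul (phi a b) (phi a' b').

Definition not_presentable_by_product (G : group) : Prop :=
  infinite_group G /\
  forall (G1 G2 : group) (phi : G1 -> G2 -> G),
    prod_hom phi ->
    finite_index (fun g => exists a b, g = phi a b) ->
    finite_set (fun g => exists a, g = phi a gone) \/
    finite_set (fun g => exists b, g = phi gone b).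

Definition powers_group (G : group) : Prop :=
  (exists g : G, g <> gone) /\
  forall (F : list G) (N : nat),
    (forall f, In f F -> f <> gone) -> 1 <= N ->
    exists (D E : G -> Prop) (gam : nat -> G),
      (forall x, D x \/ E x) /\ (forall x, ~ (D x /\ E x)) /\
      (forall f, In f F -> forall x, D x -> ~ D (gmul f x)) /\
      (forall j k, 1 <= j <= N -> 1 <= k <= N -> j <> k ->
         forall x y, E x -> E y -> gmul (gam j) x <> gmul (gam k) y).

(* Write [D_j] and [E_j] for the translates [gam j D] and [gam j E]. The sets [E_j]
   are pairwise disjoint, [D_j] is the complement of [E_j], and an element [f] of
   [F] satisfies [fD ∩ D = ∅] exactly when its conjugate by [gam j] maps [D_j]
   into [E_j]. If [P] maps [D_i] into [E_i], [Q] maps [D_k] into [E_k], [P] and [Q]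
   commute and [z] lies in [D_i ∩ D_k], then [PQz = QPz] lies in [E_i ∩ E_k]:
   ping-pong.
   - If [G] were finite, all conjugates of some [g <> 1] could be put in [F], so
     [P = Q = g] works for any two indices.
   - If [phi (a, 1) = p <> 1] and [phi (1, b) = q <> 1] and the image of [phi] has
     finitely many cosets [cH], take [F = [p; q]] and more indices than cosets: two
     of the [gam j] lie in one coset [cH], and the conjugates of [p] and [q] by
     them are conjugates by [c] of commuting elements of [H]. *)
From Stdlib Require Import List Classical ClassicalEpsilon Lia.
Import ListNotations.

Lemma pigeonhole_shared_witness {T : Type} (P : nat -> T -> Prop) :
  forall n (l : list T), length l < n ->
  (forall j, j < n -> exists c, In c l /\ P j c) ->
  exists i k c, i < k < n /\ P i c /\ P k c.
Proof.
  set (eq_dec := fun x y : T => excluded_middle_informative (x = y)).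
  induction n as [|n IH]; intros l Hl H; [lia|].
  destruct (H n ltac:(lia)) as [c0 [Hc0 Pc0]].
  destruct (classic (exists i, i < n /\ P i c0)) as [[i [Hi Pi]]|Hno].
  - exists i, n, c0. repeat split; auto; lia.
  - destruct (IH (remove eq_dec c0 l)) as [i [k [c [Hik [Pi Pk]]]]].
    + pose proof (remove_length_lt eq_dec l c0 Hc0). lia.
    + intros j Hj. destruct (H j ltac:(lia)) as [c [Hc Pc]].
      exists c. split; auto. apply in_in_remove; auto.
      intros ->. apply Hno; eauto.
    + exists i, k, c. repeat split; auto; lia.
Qed.

Section GroupFacts.
Variable G : group.

Definition conjg (x g : G) : G := gmul (gmul x g) (ginv x).

Definition translate (x : G) (S : G -> Prop) : G -> Prop :=
  fun z => S (gmul (ginv x) z).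

Lemma mul_eq1_inv (x y : G) : gmul x y = gone -> y = ginv x.
Proof.
  intro H. transitivity (gmul (gmul (ginv x) x) y).
  - rewrite gmulV, gmul1. reflexivity.
  - rewrite <- gmulA, H, gmulg1. reflexivity.
Qed.

Lemma idempotent_eq1 (x : G) : gmul x x = x -> x = gone.
Proof.
  intro H. transitivity (gmul (ginv x) (gmul x x)).
  - rewrite gmulA, gmulV, gmul1. reflexivity.
  - rewrite H, gmulV. reflexivity.
Qed.

Lemma invgK (x : G) : ginv (ginv x) = x.
Proof. symmetry. apply mul_eq1_inv, gmulV. Qed.

Lemma invMg (x y : G) : ginv (gmul x y) = gmul (ginv y) (ginv x).
Proof.
  symmetry. apply mul_eq1_inv.
  rewrite !gmulA, <- (gmulA G x y), gmulgV, gmulg1, gmulgV. reflexivity.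
Qed.

Lemma conjgM (x y g : G) : conjg (gmul x y) g = conjg x (conjg y g).
Proof. unfold conjg. rewrite invMg, !gmulA. reflexivity. Qed.

Lemma conjgKV (x g : G) : conjg x (conjg (ginv x) g) = g.
Proof.
  rewrite <- conjgM, gmulgV. unfold conjg.
  rewrite <- (mul_eq1_inv gone gone (gmul1 G gone)), gmul1, gmulg1. reflexivity.
Qed.

Lemma conjg_eq1 (x g : G) : conjg x g = gone -> g = gone.
Proof.
  intro H. rewrite <- (conjgKV (ginv x) g), invgK, H.
  unfold conjg. rewrite gmulg1, gmulgV. reflexivity.
Qed.

Lemma conjg_commute (c x y : G) : gmul x y = gmul y x ->
  gmul (conjg c x) (conjg c y) = gmul (conjg c y) (conjg c x).
Proof.
  intro Hxy. unfold conjg.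
  rewrite !gmulA, <- (gmulA G (gmul c x)), <- (gmulA G (gmul c y)), !gmulV, !gmulg1.
  rewrite <- (gmulA G c x), <- (gmulA G c y), Hxy. reflexivity.
Qed.

Lemma translate_conjg (x f z : G) :
  gmul (ginv x) (gmul (conjg x f) z) = gmul f (gmul (ginv x) z).
Proof. unfold conjg. rewrite !gmulA, gmulV, gmul1. reflexivity. Qed.

End GroupFacts.

Arguments conjg {G}.
Arguments translate {G}.

Section ProductHom.
Variables (G1 G2 G : group) (phi : G1 -> G2 -> G).
Hypothesis phi_hom : prod_hom phi.

Lemma prod_hom1 : phi gone gone = gone.
Proof. apply idempotent_eq1. rewrite <- phi_hom, !gmul1. reflexivity. Qed.

Lemma prod_homV a b : phi (ginv a) (ginv b) = ginv (phi a b).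
Proof. apply mul_eq1_inv. rewrite <- phi_hom, !gmulgV. apply prod_hom1. Qed.

Lemma conjg_prod_homl u v x : conjg (phi u v) (phi x gone) = phi (conjg u x) gone.
Proof. unfold conjg. rewrite <- prod_homV, <- !phi_hom, gmulg1, gmulgV. reflexivity. Qed.

Lemma conjg_prod_homr u v y : conjg (phi u v) (phi gone y) = phi gone (conjg v y).
Proof. unfold conjg. rewrite <- prod_homV, <- !phi_hom, gmulg1, gmulgV. reflexivity. Qed.

Lemma prod_hom_factors_commute x y :
  gmul (phi x gone) (phi gone y) = gmul (phi gone y) (phi x gone).
Proof. rewrite <- !phi_hom, !gmulg1, !gmul1. reflexivity. Qed.

End ProductHom.

Definition powers_partition {G : group} (F : list G) (N : nat)
    (D E : G -> Prop) (gam : nat -> G) : Prop :=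
  (forall x, D x \/ E x) /\ (forall x, ~ (D x /\ E x)) /\
  (forall f, In f F -> forall x, D x -> ~ D (gmul f x)) /\
  (forall j k, 1 <= j <= N -> 1 <= k <= N -> j <> k ->
     forall x y, E x -> E y -> gmul (gam j) x <> gmul (gam k) y).

Section PowersPartition.
Variables (G : group) (F : list G) (N : nat) (D E : G -> Prop) (gam : nat -> G).
Hypothesis partition : powers_partition F N D E gam.

Lemma translates_disjoint j k z : 1 <= j <= N -> 1 <= k <= N -> j <> k ->
  translate (gam j) E z -> translate (gam k) E z -> False.
Proof.
  intros Hj Hk Hjk Ej Ek. destruct partition as (_ & _ & _ & Hdisj).
  apply (Hdisj j k Hj Hk Hjk _ _ Ej Ek). unfold translate.
  rewrite !gmulA, !gmulgV, !gmul1. reflexivity.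
Qed.

Lemma translate_D_of_not_E x z : ~ translate x E z -> translate x D z.
Proof. destruct partition as (Hcover & _). destruct (Hcover (gmul (ginv x) z)); tauto. Qed.

Lemma translate_E_of_not_D x z : ~ translate x D z -> translate x E z.
Proof. destruct partition as (Hcover & _). destruct (Hcover (gmul (ginv x) z)); tauto. Qed.

Lemma conjg_maps_D_into_E f j z : In f F ->
  translate (gam j) D z -> translate (gam j) E (gmul (conjg (gam j) f) z).
Proof.
  intros Hf Dz. apply translate_E_of_not_D. unfold translate.
  rewrite translate_conjg. destruct partition as (_ & _ & HfD & _). exact (HfD f Hf _ Dz).
Qed.

Lemma E_inhabited : F <> [] -> exists x, E x.
Proof.
  destruct F as [|f F']; [congruence|]. intros _.
  destruct partition as (Hcover & _ & HfD & _).
  destruct (Hcover gone) as [D1|E1]; [|eauto].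
  exists (gmul f gone). destruct (Hcover (gmul f gone)) as [D2|]; [|assumption].
  exfalso. exact (HfD f (or_introl eq_refl) gone D1 D2).
Qed.

(* The third index only serves to produce a point outside [E_i ∪ E_k]. *)
Lemma commuting_pingpong (P Q : G) i k m :
  F <> [] -> 1 <= i <= N -> 1 <= k <= N -> 1 <= m <= N ->
  i <> k -> m <> i -> m <> k -> gmul P Q = gmul Q P ->
  (forall z, translate (gam i) D z -> translate (gam i) E (gmul P z)) ->
  (forall z, translate (gam k) D z -> translate (gam k) E (gmul Q z)) ->
  False.
Proof.
  intros HF Hi Hk Hm Hik Hmi Hmk HPQ HP HQ.
  destruct (E_inhabited HF) as [x Ex].
  set (z := gmul (gam m) x).
  assert (Em : translate (gam m) E z).
  { unfold translate, z. rewrite gmulA, gmulV, gmul1. exact Ex. }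
  assert (Di : translate (gam i) D z).
  { apply translate_D_of_not_E. intro. apply (translates_disjoint m i z); auto. }
  assert (Dk : translate (gam k) D z).
  { apply translate_D_of_not_E. intro. apply (translates_disjoint m k z); auto. }
  assert (EQP : translate (gam k) E (gmul Q (gmul P z))).
  { apply HQ, translate_D_of_not_E. intro. apply (translates_disjoint i k (gmul P z)); auto. }
  assert (EPQ : translate (gam i) E (gmul P (gmul Q z))).
  { apply HP, translate_D_of_not_E. intro. apply (translates_disjoint k i (gmul Q z)); auto. }
  rewrite gmulA, HPQ, <- gmulA in EPQ.
  exact (translates_disjoint i k _ Hi Hk Hik EPQ EQP).
Qed.

End PowersPartition.

Lemma powers_group_infinite (G : group) : powers_group G -> infinite_group G.
Proof.
  intros [[g Hg] HPow] [l Hl].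
  set (F := map (fun x => conjg x g) l).
  assert (HF : F <> []).
  { unfold F. specialize (Hl gone I). destruct l; [contradiction|discriminate]. }
  destruct (HPow F 3) as (D & E & gam & partition); [|lia|].
  { intros f Hf. unfold F in Hf. apply in_map_iff in Hf.
    destruct Hf as [x [<- _]]. intro H. exact (Hg (conjg_eq1 _ _ _ H)). }
  assert (Hg_pingpong : forall j z, translate (gam j) D z -> translate (gam j) E (gmul g z)).
  { intros j z Dz. rewrite <- (conjgKV G (gam j) g).
    apply (conjg_maps_D_into_E G F 3 D E gam partition); [|exact Dz].
    apply in_map_iff. exists (ginv (gam j)). auto. }
  exact (commuting_pingpong G F 3 D E gam partition g g 1 2 3
           HF ltac:(lia) ltac:(lia) ltac:(lia) ltac:(lia) ltac:(lia) ltac:(lia)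
           eq_refl (Hg_pingpong 1) (Hg_pingpong 2)).
Qed.

Lemma powers_group_product_factor_trivial (G G1 G2 : group) (phi : G1 -> G2 -> G) :
  powers_group G -> prod_hom phi ->
  finite_index (fun g => exists a b, g = phi a b) ->
  (forall a, phi a gone = gone) \/ (forall b, phi gone b = gone).
Proof.
  intros [_ HPow] phi_hom [l Hl].
  apply NNPP. intros [Ha Hb] % not_or_and.
  apply not_all_ex_not in Ha as [a Ha]. apply not_all_ex_not in Hb as [b Hb].
  set (p := phi a gone). set (q := phi gone b). set (N := length l + 2).
  destruct (HPow [p; q] N) as (D & E & gam & partition); [|unfold N; lia|].
  { intros f [<-|[<-|[]]]; assumption. }
  destruct (pigeonhole_shared_witness
              (fun j c => exists u v, gam (S j) = gmul c (phi u v)) (length l + 1) l)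
    as (i & k & c & Hik & [u1 [v1 Hi]] & [u2 [v2 Hk]]); [lia| |].
  { intros j _. destruct (Hl (gam (S j))) as (c & h & Hc & [u [v ->]] & Heq). eauto. }
  apply (commuting_pingpong G [p; q] N D E gam partition
           (conjg (gam (S i)) p) (conjg (gam (S k)) q) (S i) (S k) N);
    try discriminate; try (unfold N; lia).
  - rewrite Hi, Hk, !conjgM. unfold p, q.
    rewrite (conjg_prod_homl _ _ _ _ phi_hom), (conjg_prod_homr _ _ _ _ phi_hom).
    apply conjg_commute, (prod_hom_factors_commute _ _ _ _ phi_hom).
  - intros z. apply (conjg_maps_D_into_E G _ N D E gam partition). left; reflexivity.
  - intros z. apply (conjg_maps_D_into_E G _ N D E gam partition). right; left; reflexivity.
Qed.

Theorem proposition5p1 (G : group) :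
  finitely_generated G -> powers_group G -> not_presentable_by_product G.
Proof.
  intros _ HPow. split; [exact (powers_group_infinite G HPow)|].
  intros G1 G2 phi phi_hom Hindex.
  destruct (powers_group_product_factor_trivial G G1 G2 phi HPow phi_hom Hindex)
    as [Htriv|Htriv]; [left|right];
    exists [gone]; intros x [y ->]; rewrite Htriv; left; reflexivity.
Qed.
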